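(* Let $\lambda$ be a partition with $d$ distinct part sizes and $\lambda'$ its conjugate. For $r,s\in\{0,\dots,d\}$, \[ p_{r,s}[\lambda](t,q)=p^{\rm col}_{d+1-r,\,d-s}[\lambda'](q,t),\qquad \overline{p}_{r,s}[\lambda](t,q)=\overline{p}^{\rm col}_{d+1-r,\,d-s}[\lambda'](q,t), \] where the first subscript is read modulo $d+1$ (so $p^{\rm col}_{d+1,s}[\lambda']=p^{\rm col}_{0,s}[\lambda']$), and $f(t,q)$ denotes $f$ with $q$ and $t$ interchanged.
   Context: Partitions are Young diagrams in French convention (cells $(x,y)\in\mathbb{Z}_{>0}^2$, $x\le\lambda_y$), $\lambda'$ the conjugate; for $c=(x,y)\in\lambda$, $a_\lambda(c)=\lambda_y-x$, $\ell_\lambda(c)=\lambda'_x-y$; $n(\kappa)=\sum_{c\in\kappa}\ell_\kappa(c)$, $n'(\kappa)=\sum_{c\in\kappa}a_\kappa(c)$, $n(\rho/\kappa)=n(\rho)-n(\kappa)$, $n'(\rho/\kappa)=n'(\rho)-n'(\kappa)$. For $\kappa\subseteq\rho$, $\mathcal{R}_{\rho/\kappa}$ (resp. $\mathcal{C}_{\rho/\kappa}$): cells of $\kappa$ in a row (resp. column) containing a cell of $\rho/\kappa$. $[i,j]=1-q^it^j$. For $\kappa\lessdot\rho$ (one-cell difference): $\alpha_{\rho/\kappa}=\prod_{c\in\mathcal{R}_{\rho/\kappa}}\frac{[a_\kappa(c),\ell_\kappa(c)+1]}{[a_\rho(c),\ell_\rho(c)+1]}\prod_{c\in\mathcal{C}_{\rho/\kappa}}\frac{[a_\kappa(c)+1,\ell_\kappa(c)]}{[a_\rho(c)+1,\ell_\rho(c)]}$,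 $\overline{\alpha}_{\rho/\kappa}=\prod_{c\in\mathcal{R}_{\rho/\kappa}}\frac{[a_\kappa(c)+1,\ell_\kappa(c)]}{[a_\rho(c)+1,\ell_\rho(c)]}\prod_{c\in\mathcal{C}_{\rho/\kappa}}\frac{[a_\kappa(c),\ell_\kappa(c)+1]}{[a_\rho(c),\ell_\rho(c)+1]}$, $\beta=1/\alpha$, $\overline{\beta}=1/\overline{\alpha}$. For $\mu\lessdot\lambda\lessdot\nu$, with $A=n'(\lambda/\mu)-n'(\nu/\lambda)$, $B=n(\nu/\lambda)-n(\lambda/\mu)$: $\gamma_{\nu/\lambda/\mu}=\frac{(1-q^At^B)(1-q^{A+1}t^{B-1})}{(1-q)(1-t)}$. Probabilities: $\mathcal{P}_\lambda(\lambda\rightarrow\nu)=t^{n(\nu/\lambda)}\alpha_{\nu/\lambda}$, $\overline{\mathcal{P}}_\lambda(\lambda\leftarrow\nu)=t^{n(\nu/\lambda)}\overline{\alpha}_{\nu/\lambda}$, for $\mu\lessdot\lambda$: $\mathcal{P}_\lambda(\mu\rightarrow\nu)=t^{B-1}\alpha_{\nu/\lambda}\beta_{\lambda/\mu}/\gamma_{\nu/\lambda/\mu}$, $\overline{\mathcal{P}}_\lambda(\mu\leftarrow\nu)=t^{B-1}\overline{\alpha}_{\nu/\lambda}\overline{\beta}_{\lambda/\mu}/\gamma_{\nu/\lambda/\mu}$. If $\lambda$ has distinct part sizes $u_1>\dots>u_d>0$ with $v_i$ the multiplicity of $u_i$, set $v_{1,s}=v_1+\dots+v_s$; for $0\le s\le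 d$, $\lambda^{(+s)}$ is obtained by adding a cell in row $v_{1,s}+1$; $\lambda^{(-0)}=\lambda$, and for $1\le r\le d$, $\lambda^{(-r)}$ is obtained by removing a cell from row $v_{1,r}$. $p_{r,s}[\lambda](q,t)=\mathcal{P}_\lambda(\lambda^{(-r)}\rightarrow\lambda^{(+s)})$, $\overline{p}_{r,s}[\lambda](q,t)=\overline{\mathcal{P}}_\lambda(\lambda^{(-r)}\leftarrow\lambda^{(+s)})$, and $p^{\rm col}_{r,s}[\lambda](q,t)=p_{r,s}[\lambda](q^{-1},t^{-1})$, $\overline{p}^{\rm col}_{r,s}[\lambda](q,t)=\overline{p}_{r,s}[\lambda](q^{-1},t^{-1})$. *)

From mathcomp Require Import all_boot all_order all_algebra fraction.
Set Implicit Arguments. Unset Strict Implicit. Unset Printing Implicit Defensive.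
Import Order.TTheory GRing.Theory Num.Theory.
Local Open Scope ring_scope.

(* A partition is a weakly decreasing list of positive parts (rows, bottom to
   top in French convention): lambda_y = nth 0 l (y-1), rows indexed from 1. *)
Definition is_partition (l : seq nat) : bool :=
  sorted geq l && all (fun p => 0 < p)%N l.

Definition part (l : seq nat) (y : nat) : nat := nth 0%N l y.-1.
Definition conjp (l : seq nat) (x : nat) : nat := count (fun p => x <= p)%N l.
Definition conj_part (l : seq nat) : seq nat :=
  mkseq (fun i => conjp l i.+1) (head 0%N l).

(* cells (x,y), x = column, y = row, both >= 1 *)
Definition cells (l : seq nat) : seq (nat * nat) :=
  flatten [seq [seq (x.+1, y.+1) | x <- iota 0 (nth 0%N l y)] | y <- iota 0 (size l)].

Definition arm (l : seq nat) (c : nat * nat) : int :=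
  (part l c.2)%:Z - (c.1)%:Z.
Definition leg (l : seq nat) (c : nat * nat) : int :=
  (conjp l c.1)%:Z - (c.2)%:Z.

Definition nleg (l : seq nat) : int := \sum_(c <- cells l) leg l c.
Definition narm (l : seq nat) : int := \sum_(c <- cells l) arm l c.

Definition skew (rho kappa : seq nat) : seq (nat * nat) :=
  [seq c <- cells rho | c \notin cells kappa].
Definition Rset (rho kappa : seq nat) : seq (nat * nat) :=
  [seq c <- cells kappa | has (fun e => e.2 == c.2) (skew rho kappa)].
Definition Cset (rho kappa : seq nat) : seq (nat * nat) :=
  [seq c <- cells kappa | has (fun e => e.1 == c.1) (skew rho kappa)].

Section Probabilities.
Variables (F : fieldType) (q t : F).

Definition br (i j : int) : F := 1 - q ^ i * t ^ j.

Definition alpha (rho kappa : seq nat) : F :=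
  (\prod_(c <- Rset rho kappa)
     (br (arm kappa c) (leg kappa c + 1) / br (arm rho c) (leg rho c + 1))) *
  (\prod_(c <- Cset rho kappa)
     (br (arm kappa c + 1) (leg kappa c) / br (arm rho c + 1) (leg rho c))).

Definition alphabar (rho kappa : seq nat) : F :=
  (\prod_(c <- Rset rho kappa)
     (br (arm kappa c + 1) (leg kappa c) / br (arm rho c + 1) (leg rho c))) *
  (\prod_(c <- Cset rho kappa)
     (br (arm kappa c) (leg kappa c + 1) / br (arm rho c) (leg rho c + 1))).

Definition beta (rho kappa : seq nat) : F := (alpha rho kappa)^-1.
Definition betabar (rho kappa : seq nat) : F := (alphabar rho kappa)^-1.

Definition Aexp (nu lam mu : seq nat) : int :=
  (narm lam - narm mu) - (narm nu - narm lam).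
Definition Bexp (nu lam mu : seq nat) : int :=
  (nleg nu - nleg lam) - (nleg lam - nleg mu).

Definition gamma (nu lam mu : seq nat) : F :=
  let A := Aexp nu lam mu in let B := Bexp nu lam mu in
  ((1 - q ^ A * t ^ B) * (1 - q ^ (A + 1) * t ^ (B - 1))) / ((1 - q) * (1 - t)).

Definition P0 (lam nu : seq nat) : F := t ^ (nleg nu - nleg lam) * alpha nu lam.
Definition Pbar0 (lam nu : seq nat) : F :=
  t ^ (nleg nu - nleg lam) * alphabar nu lam.
(* P_lam(mu -> nu) and Pbar_lam(mu <- nu), mu <. lam *)
Definition P1 (lam mu nu : seq nat) : F :=
  t ^ (Bexp nu lam mu - 1) * alpha nu lam * beta lam mu / gamma nu lam mu.
Definition Pbar1 (lam mu nu : seq nat) : F :=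
  t ^ (Bexp nu lam mu - 1) * alphabar nu lam * betabar lam mu / gamma nu lam mu.

End Probabilities.

Definition dparts (l : seq nat) : seq nat := undup l.
Definition ndist (l : seq nat) : nat := size (dparts l).
(* v_{1,s} = v_1 + ... + v_s (= 0 for s = 0) *)
Definition vsum (l : seq nat) (s : nat) : nat :=
  if s is 0 then 0%N else count (fun p => nth 0%N (dparts l) s.-1 <= p)%N l.

(* add a cell in row k (k >= 1) / remove a cell from row k (dropping a zero part) *)
Definition add_cell (l : seq nat) (k : nat) : seq nat := incr_nth l k.-1.
Definition rem_cell (l : seq nat) (k : nat) : seq nat :=
  [seq p <- set_nth 0%N l k.-1 (nth 0%N l k.-1).-1 | (0 < p)%N].

Definition lplus (l : seq nat) (s : nat) : seq nat := add_cell l (vsum l s).+1.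
Definition lminus (l : seq nat) (r : nat) : seq nat :=
  if r is 0 then l else rem_cell l (vsum l r).

Definition prs (F : fieldType) (q t : F) (l : seq nat) (r s : nat) : F :=
  if r is 0 then P0 q t l (lplus l s)
  else P1 q t l (lminus l r) (lplus l s).
Definition pbarrs (F : fieldType) (q t : F) (l : seq nat) (r s : nat) : F :=
  if r is 0 then Pbar0 q t l (lplus l s)
  else Pbar1 q t l (lminus l r) (lplus l s).

Definition pcol (F : fieldType) (q t : F) (l : seq nat) (r s : nat) : F :=
  prs q^-1 t^-1 l r s.
Definition pbarcol (F : fieldType) (q t : F) (l : seq nat) (r s : nat) : F :=
  pbarrs q^-1 t^-1 l r s.

Definition QT : fieldType := {fraction {poly {poly rat}}}.
Definition qv : QT := tofrac ((('X : {poly rat}))%:P).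
Definition tv : QT := tofrac ('X : {poly {poly rat}}).

(* Conjugation transposes Young diagrams: it exchanges arms and legs, the sets R and C
   of a one-cell extension rho/kappa, and the statistics n and n'.  Since
   [i,j](1/q,1/t) = -[j,i](t,q) / (q^i t^j), every hook factor of alpha_{rho'/kappa'} at
   (1/q,1/t) is the matching factor of alpha_{rho/kappa} at (t,q), times q for a cell of
   C_{rho/kappa} and t for a cell of R_{rho/kappa}.  Hence alpha (and likewise alphabar)
   picks up q^{n(rho/kappa)} t^{n'(rho/kappa)} and gamma picks up q t, which exactly
   compensate the exchange of the t-power for a q-power in P and Pbar.  It remains to match
   the corners: the distinct parts of lambda' are v_d > ... > v_1, so the corner added in
   row v_s + 1 (removed in row v_r) of lambda becomes the corner added in row v'_{d-s} + 1
   (removed in row v'_{d+1-r}) of lambda'. *)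

From Pilot Require Import Defs.
From mathcomp Require Import all_boot all_order all_algebra fraction.
From mathcomp Require Import zify ring.
Set Implicit Arguments. Unset Strict Implicit. Unset Printing Implicit Defensive.
Import Order.TTheory GRing.Theory Num.Theory.

(** * Conjugate partitions *)

Lemma geq_trans : transitive geq.
Proof. exact: rev_trans leq_trans. Qed.

Lemma eqn_from_leq m n : (forall x, 0 < x -> (x <= m) = (x <= n)) -> m = n.
Proof.
move=> H; apply/eqP; rewrite eqn_leq; apply/andP; split.
  by case: m H => // m H; rewrite -H.
by case: n H => // n H; rewrite H.
Qed.

Section Partition.
Variable l : seq nat.
Hypothesis Hl : is_partition l.

Lemma part_le_head y : part l y <= head 0 l.
Proof.
case: l Hl => [|a s] /andP[/= Hs _]; first by rewrite /part nth_nil.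
have /allP Ha := order_path_min geq_trans Hs.
case: y => [|[|y]] //; rewrite /part /=.
by case: (ltnP y (size s)) => hy; [exact: Ha (mem_nth 0 hy) | rewrite nth_default].
Qed.

Lemma part_antimono y y' : 0 < y -> y <= y' -> part l y' <= part l y.
Proof.
case/andP: Hl => Hs _ hy hyy; rewrite /part.
case: (ltnP y'.-1 (size l)) => h; last by rewrite (nth_default _ h).
by apply: (sorted_leq_nth geq_trans leqnn 0 Hs); rewrite ?inE; lia.
Qed.

Lemma partition_part_gt0 y : 0 < y -> y <= size l -> 0 < part l y.
Proof.
case/andP: Hl => _ /(all_nthP 0) H hy hys.
by apply: H; lia.
Qed.

Lemma conjp_eq0 x : head 0 l < x -> conjp l x = 0.
Proof.
move=> hx; apply/eqP; rewrite -leqn0 leqNgt -has_count.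
apply/hasP => -[p /(nthP 0) [i _ <-] /= hxp].
by have := part_le_head i.+1; rewrite /part /=; lia.
Qed.

Lemma size_partition : size l = conjp l 1.
Proof.
case/andP: Hl => _ /allP Ha; rewrite -(count_predT l) /conjp.
by apply: eq_in_count => p /Ha.
Qed.

End Partition.

Lemma leq_part_conjp l x y : is_partition l -> 0 < x -> 0 < y ->
  (x <= part l y) = (y <= conjp l x).
Proof.
elim: l y => [|a l IH] y Hp hx hy.
  by rewrite /part /conjp /= nth_nil; lia.
case/andP: Hp => Hs /andP[_ Hpos].
have Hl : is_partition l by rewrite /is_partition (path_sorted Hs).
have /allP Hm := order_path_min geq_trans Hs.
rewrite /conjp /=; case: (leqP x a) => hxa.
  case: y hy => [//|[|y]] _ //=.
  by rewrite -[part _ _]/(part l y.+1) IH // add1n ltnS.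
have -> : count (fun p => x <= p) l = 0.
  apply/eqP; rewrite -leqn0 leqNgt -has_count.
  by apply/hasP => -[p /Hm /= hp hxp]; lia.
case: y hy => [//|[|y]] _ /=; first by rewrite leqNgt hxa.
rewrite /part /=; case: (ltnP y (size l)) => hy; last by rewrite nth_default //; lia.
by have /= := Hm _ (mem_nth 0 hy); lia.
Qed.

Lemma conjp_antimono l x x' : x <= x' -> conjp l x' <= conjp l x.
Proof. by move=> h; apply: sub_count => p /=; apply: leq_trans. Qed.

Lemma conj_partition l : is_partition l -> is_partition (conj_part l).
Proof.
move=> Hl; apply/andP; split.
  apply: (@homo_sorted _ _ _ leq); last exact: iota_sorted.
  by move=> i j hij; apply: conjp_antimono.
rewrite all_map; apply/allP => i; rewrite mem_iota /= => hi.
rewrite /conjp -has_count; apply/hasP; exists (head 0 l) => //.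
by case: l Hl hi => //= a l _ _; rewrite mem_head.
Qed.

Lemma part_conj l x : is_partition l -> 0 < x -> part (conj_part l) x = conjp l x.
Proof.
move=> Hl hx; rewrite /part /conj_part.
case: (ltnP x.-1 (head 0 l)) => h; first by rewrite nth_mkseq // prednK.
by rewrite nth_default ?size_mkseq // conjp_eq0 //; lia.
Qed.

Lemma conjp_conj l y : is_partition l -> 0 < y -> conjp (conj_part l) y = part l y.
Proof.
move=> Hl hy; apply: eqn_from_leq => x hx.
by rewrite -leq_part_conjp ?conj_partition // part_conj // -leq_part_conjp.
Qed.

Lemma partition_eq l l' : is_partition l -> is_partition l' ->
  (forall y, 0 < y -> part l y = part l' y) -> l = l'.
Proof.
move=> Hl Hl' H.
have Hsize : size l = size l'.
  rewrite !size_partition //; apply: eqn_from_leq => y hy.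
  by rewrite -!leq_part_conjp // H.
by apply: (eq_from_nth (x0 := 0)) => // i _; exact: (H i.+1).
Qed.

Lemma mem_cells l c : (c \in cells l) = [&& 0 < c.1, c.1 <= part l c.2 & 0 < c.2].
Proof.
case: c => x y /=; apply/flatten_mapP/idP.
  case=> j; rewrite mem_iota => hj /mapP[i]; rewrite mem_iota => hi [-> ->].
  by rewrite /part /=; lia.
case/and3P; case: x => // x; case: y => // y _ hx _.
have hy : y < size l by rewrite ltnNge; apply: contraL hx => h; rewrite /part /= nth_default.
by exists y; rewrite ?mem_iota //; apply/mapP; exists x; rewrite // mem_iota.
Qed.

Lemma cells_gt0 l c : c \in cells l -> 0 < c.1 /\ 0 < c.2.
Proof. by rewrite mem_cells => /and3P[]. Qed.

Lemma cells_uniq l : uniq (cells l).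
Proof.
rewrite /cells; elim: (iota 0 (size l)) (iota_uniq 0 (size l)) => //= y s IH /andP[hy hs].
rewrite cat_uniq IH // map_inj_uniq ?iota_uniq /=; last by move=> a b [].
rewrite andbT; apply/hasP => -[c /flatten_mapP[y' hy' /mapP[x' _ ->]] /mapP[x _ [_ eyy]]].
by move: hy; rewrite -[y]/(y.+1.-1) -eyy /= hy'.
Qed.

Definition transpose_cell (c : nat * nat) : nat * nat := (c.2, c.1).

Lemma transpose_cellK : involutive transpose_cell. Proof. by case. Qed.
Lemma transpose_cell_inj : injective transpose_cell.
Proof. exact: inv_inj transpose_cellK. Qed.

Lemma cells_conj l : is_partition l ->
  perm_eq (cells (conj_part l)) (map transpose_cell (cells l)).
Proof.
move=> Hl; apply: uniq_perm; rewrite ?cells_uniq ?(map_inj_uniq transpose_cell_inj) ?cells_uniq //.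
case=> x y; rewrite -[(x, y)]/(transpose_cell (y, x)) (mem_map transpose_cell_inj) !mem_cells /=.
case: (posnP x) => [->|hx]; case: (posnP y) => [->|hy]; rewrite ?andbF //=.
by rewrite part_conj // -leq_part_conjp.
Qed.

Lemma arm_conj l c : is_partition l -> 0 < c.1 ->
  arm (conj_part l) (transpose_cell c) = leg l c.
Proof. by move=> Hl hc; rewrite /arm /leg /= part_conj. Qed.

Lemma leg_conj l c : is_partition l -> 0 < c.2 ->
  leg (conj_part l) (transpose_cell c) = arm l c.
Proof. by move=> Hl hc; rewrite /arm /leg /= conjp_conj. Qed.

Lemma narm_conj l : is_partition l -> narm (conj_part l) = nleg l.
Proof.
move=> Hl; rewrite /narm /nleg (perm_big _ (cells_conj Hl)) big_map.
by apply: eq_big_seq => c /cells_gt0[hc _]; rewrite arm_conj.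
Qed.

Lemma nleg_conj l : is_partition l -> nleg (conj_part l) = narm l.
Proof.
move=> Hl; rewrite /narm /nleg (perm_big _ (cells_conj Hl)) big_map.
by apply: eq_big_seq => c /cells_gt0[_ hc]; rewrite leg_conj.
Qed.

(** * One-cell extensions *)

Record covers (kappa rho : seq nat) (e : nat * nat) : Prop := Covers {
  covers_kappa : is_partition kappa;
  covers_rho : is_partition rho;
  covers_part : forall y, 0 < y -> part rho y = part kappa y + (y == e.2);
  covers_conjp : forall x, 0 < x -> conjp rho x = conjp kappa x + (x == e.1);
  covers_col : e.1 = (part kappa e.2).+1;
  covers_row : e.2 = (conjp kappa e.1).+1 }.

Lemma covers_of_parts kappa rho y : is_partition kappa -> is_partition rho -> 0 < y ->
    (forall y', 0 < y' -> part rho y' = part kappa y' + (y' == y)) ->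
  covers kappa rho ((part kappa y).+1, y).
Proof.
move=> Hk Hr hy Hpart; set x := (part kappa y).+1.
have above y' : 0 < y' -> y' < y -> x <= part kappa y'.
  move=> hy' lty; have := part_antimono Hr hy' (ltnW lty).
  by rewrite !Hpart // eqxx (ltn_eqF lty); lia.
have below y' : y <= y' -> part kappa y' < x by move=> h; rewrite ltnS part_antimono.
have conjp_x : conjp kappa x = y.-1.
  apply: eqn_from_leq => y' hy'; rewrite -leq_part_conjp //.
  by case: (ltnP y' y) => h; [rewrite above | rewrite leqNgt below]; lia.
split=> //=; last by rewrite conjp_x prednK.
move=> x' hx'; apply: eqn_from_leq => y' hy'; rewrite -leq_part_conjp // Hpart //.
case: (eqVneq x' x) => [->|hx].
  rewrite conjp_x addn1 prednK //.
  case: (ltngtP y' y) => h; rewrite ?addn0.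
  - by rewrite above.
  - by rewrite leqNgt below // ltnW.
  - by rewrite h /= addn1 leqnn.
rewrite [_ + false]addn0 -leq_part_conjp //.
case: (eqVneq y' y) => [->|_]; last by rewrite addn0.
by rewrite addn1 leq_eqVlt ltnS (negbTE hx).
Qed.

Lemma sumz_count (T : Type) (P : pred T) (s : seq T) :
  (\sum_(c <- s) (P c)%:Z = (count P s)%:Z)%R.
Proof. by elim: s => [|c s IH]; rewrite ?big_nil ?big_cons // IH -PoszD. Qed.

Section Covers.
Local Open Scope ring_scope.

Variables (kappa rho : seq nat) (e : nat * nat).
Hypothesis H : covers kappa rho e.

Lemma covers_corner_gt0 : (0 < e.1)%N /\ (0 < e.2)%N.
Proof. by rewrite (covers_col H) (covers_row H). Qed.

Lemma corner_notin : e \notin cells kappa.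
Proof. by rewrite mem_cells (covers_col H) ltnn andbF. Qed.

Lemma mem_cells_covers c : (c \in cells rho) = (c == e) || (c \in cells kappa).
Proof.
have [e1 e2] := covers_corner_gt0.
case: c e H e1 e2 => x y [x0 y0] He /= e1 e2; rewrite !mem_cells /= xpair_eqE.
case: (posnP y) => [->|hy]; first by rewrite andbF; lia.
rewrite !andbT (covers_part He) //; have /= -> := covers_col He.
case: (eqVneq y y0) => [->|_]; rewrite ?andbF ?addn0 //.
rewrite addn1 andbT; case: (posnP x) => [->|hx] //=.
by rewrite leq_eqVlt ltnS.
Qed.

Lemma cells_covers : perm_eq (cells rho) (e :: cells kappa).
Proof.
apply: uniq_perm; rewrite /= ?cells_uniq ?corner_notin //.
by move=> c; rewrite mem_cells_covers inE.
Qed.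

Lemma skew_covers : Defs.skew rho kappa =i [:: e].
Proof.
move=> c; rewrite mem_filter mem_cells_covers inE.
by case: (eqVneq c e) => [->|_]; rewrite ?corner_notin ?eqxx //= andNb.
Qed.

Lemma Rset_covers : Rset rho kappa = [seq c <- cells kappa | c.2 == e.2].
Proof. by apply: eq_filter => c; rewrite (eq_has_r skew_covers) /= orbF eq_sym. Qed.

Lemma Cset_covers : Cset rho kappa = [seq c <- cells kappa | c.1 == e.1].
Proof. by apply: eq_filter => c; rewrite (eq_has_r skew_covers) /= orbF eq_sym. Qed.

Lemma arm_covers c : (0 < c.2)%N -> arm rho c = arm kappa c + (c.2 == e.2)%:Z.
Proof. by move=> h; rewrite /arm (covers_part H) // PoszD addrAC. Qed.

Lemma leg_covers c : (0 < c.1)%N -> leg rho c = leg kappa c + (c.1 == e.1)%:Z.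
Proof. by move=> h; rewrite /leg (covers_conjp H) // PoszD addrAC. Qed.

Lemma mem_Rset_covers c : c \in Rset rho kappa ->
  arm rho c = arm kappa c + 1 /\ leg rho c = leg kappa c.
Proof.
rewrite Rset_covers mem_filter => /andP[/eqP hrow hc]; have [h1 h2] := cells_gt0 hc.
rewrite arm_covers // leg_covers // hrow eqxx; split=> //.
move: hc; rewrite mem_cells (covers_col H) -hrow => /and3P[_ hx _].
by rewrite (ltn_eqF (leq_ltn_trans hx (ltnSn _))); apply: addr0.
Qed.

Lemma mem_Cset_covers c : c \in Cset rho kappa ->
  arm rho c = arm kappa c /\ leg rho c = leg kappa c + 1.
Proof.
rewrite Cset_covers mem_filter => /andP[/eqP hcol hc]; have [h1 h2] := cells_gt0 hc.
rewrite arm_covers // leg_covers // hcol eqxx; split=> //.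
move: hc; rewrite mem_cells leq_part_conjp ?(covers_kappa H) // (covers_row H) -hcol.
by case/and3P=> _ hy _; rewrite (ltn_eqF (leq_ltn_trans hy (ltnSn _))); apply: addr0.
Qed.

Lemma narm_covers : narm rho - narm kappa = (size (Rset rho kappa))%:Z.
Proof.
have [_ e2] := covers_corner_gt0.
have arm_e : arm rho e = 0.
  by rewrite /arm (covers_part H) // eqxx /= addn1 -(covers_col H) subrr.
rewrite /narm (perm_big _ cells_covers) big_cons /= arm_e add0r Rset_covers size_filter.
rewrite (eq_big_seq (fun c => arm kappa c + (c.2 == e.2)%:Z)) => [|c /cells_gt0[_ hc]].
  by rewrite big_split /= addrAC subrr add0r sumz_count.
by rewrite arm_covers.
Qed.

Lemma nleg_covers : nleg rho - nleg kappa = (size (Cset rho kappa))%:Z.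
Proof.
have [e1 _] := covers_corner_gt0.
have leg_e : leg rho e = 0.
  by rewrite /leg (covers_conjp H) // eqxx /= addn1 -(covers_row H) subrr.
rewrite /nleg (perm_big _ cells_covers) big_cons /= leg_e add0r Cset_covers size_filter.
rewrite (eq_big_seq (fun c => leg kappa c + (c.1 == e.1)%:Z)) => [|c /cells_gt0[hc _]].
  by rewrite big_split /= addrAC subrr add0r sumz_count.
by rewrite leg_covers.
Qed.

End Covers.

Lemma covers_conj kappa rho e : covers kappa rho e ->
  covers (conj_part kappa) (conj_part rho) (transpose_cell e).
Proof.
move=> H; have Hk := covers_kappa H; have Hr := covers_rho H.
have [e1 e2] := covers_corner_gt0 H.
split; rewrite ?conj_partition //=.
- by move=> y hy; rewrite !part_conj // (covers_conjp H).
- by move=> x hx; rewrite !conjp_conj // (covers_part H).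
- by rewrite part_conj // (covers_row H).
- by rewrite conjp_conj // (covers_col H).
Qed.

Section CoversConj.
Local Open Scope ring_scope.
Variables (kappa rho : seq nat) (e : nat * nat).
Hypothesis H : covers kappa rho e.

Lemma Rset_conj :
  perm_eq (Rset (conj_part rho) (conj_part kappa)) (map transpose_cell (Cset rho kappa)).
Proof.
rewrite (Rset_covers (covers_conj H)) (Cset_covers H).
apply: perm_trans (perm_filter _ (cells_conj (covers_kappa H))) _.
by rewrite filter_map (@eq_filter _ _ (fun c => c.1 == e.1)).
Qed.

Lemma Cset_conj :
  perm_eq (Cset (conj_part rho) (conj_part kappa)) (map transpose_cell (Rset rho kappa)).
Proof.
rewrite (Cset_covers (covers_conj H)) (Rset_covers H).
apply: perm_trans (perm_filter _ (cells_conj (covers_kappa H))) _.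
by rewrite filter_map (@eq_filter _ _ (fun c => c.2 == e.2)).
Qed.

Lemma big_Rset_conj (R : Type) (idx : R) (op : Monoid.com_law idx) (G : int -> int -> R) :
  \big[op/idx]_(c <- Rset (conj_part rho) (conj_part kappa))
      G (arm (conj_part kappa) c) (leg (conj_part kappa) c)
  = \big[op/idx]_(c <- Cset rho kappa) G (leg kappa c) (arm kappa c).
Proof.
rewrite (perm_big _ Rset_conj) big_map; apply: eq_big_seq => c.
rewrite (Cset_covers H) mem_filter => /andP[_ /cells_gt0[h1 h2]].
by rewrite arm_conj ?leg_conj ?(covers_kappa H).
Qed.

Lemma big_Cset_conj (R : Type) (idx : R) (op : Monoid.com_law idx) (G : int -> int -> R) :
  \big[op/idx]_(c <- Cset (conj_part rho) (conj_part kappa))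
      G (arm (conj_part kappa) c) (leg (conj_part kappa) c)
  = \big[op/idx]_(c <- Rset rho kappa) G (leg kappa c) (arm kappa c).
Proof.
rewrite (perm_big _ Cset_conj) big_map; apply: eq_big_seq => c.
rewrite (Rset_covers H) mem_filter => /andP[_ /cells_gt0[h1 h2]].
by rewrite arm_conj ?leg_conj ?(covers_kappa H).
Qed.

End CoversConj.

Lemma sorted_geq_part s : (forall y, 0 < y -> part s y.+1 <= part s y) -> sorted geq s.
Proof. by move=> H; apply/(sortedP 0) => i _; exact: (H i.+1). Qed.

Lemma nth_filter_gt0 s i : sorted geq s -> nth 0 [seq p <- s | 0 < p] i = nth 0 s i.
Proof.
elim: s i => [|a s IH] i //= Hs; have /allP Hmin := order_path_min geq_trans Hs.
case: a Hs Hmin => [|a] Hs Hmin; last by case: i => //= i; rewrite IH // (path_sorted Hs).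
have s0 p : p \in s -> p = 0 by move/Hmin; rewrite /= leqn0 => /eqP.
have -> : [seq p <- s | 0 < p] = [::].
  by apply/eqP; rewrite -[_ == _]negbK -has_filter; apply/hasPn => p /s0 ->.
case: i => [|i] //=; case: (ltnP i (size s)) => h; last by rewrite nth_default.
by rewrite (s0 _ (mem_nth 0 h)).
Qed.

Lemma part_add_cell l y y' : 0 < y -> 0 < y' -> part (add_cell l y) y' = part l y' + (y' == y).
Proof.
case: y => // y; case: y' => // y' _ _.
by rewrite /part /add_cell nth_incr_nth /= eqSS eq_sym addnC.
Qed.

Section Corners.
Variables (l : seq nat) (y : nat).
Hypotheses (Hl : is_partition l) (hy : 0 < y).

Lemma add_cell_partition : (1 < y -> part l y < part l y.-1) -> is_partition (add_cell l y).
Proof.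
move=> addable; apply/andP; split.
  apply: sorted_geq_part => y' hy'; rewrite !part_add_cell //.
  case: (eqVneq y'.+1 y) => [ey|ne]; last first.
    by rewrite [_ + false]addn0 (leq_trans (part_antimono Hl hy' (leqnSn y'))) ?leq_addr.
  by move: addable; rewrite -ey (ltn_eqF (ltnSn y')) /= addn0 addn1 => /(_ hy').
apply/(all_nthP 0) => i; rewrite size_incr_nth => hi.
rewrite -[nth 0 _ i]/(part (add_cell l y) i.+1) part_add_cell //.
case: (ltnP i (size l)) => hil; first by rewrite ltn_addr // (partition_part_gt0 Hl (ltn0Sn i)).
case: (eqVneq i.+1 y) => [_|hne]; first by rewrite /= addn1.
have yi : i.+1 < y by move: hi hil hne hy; case: ifP; lia.
have := addable (leq_ltn_trans (ltn0Sn i) yi).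
by rewrite /part !nth_default //; lia.
Qed.

Lemma covers_add_cell : (1 < y -> part l y < part l y.-1) ->
  covers l (add_cell l y) ((part l y).+1, y).
Proof.
move=> addable; apply: covers_of_parts; rewrite ?add_cell_partition //.
by move=> y'; apply: part_add_cell.
Qed.

Hypothesis removable : part l y.+1 < part l y.

Let lowered := set_nth 0 l y.-1 (nth 0 l y.-1).-1.

Lemma part_lowered y' : 0 < y' -> part lowered y' = part l y' - (y' == y).
Proof.
move=> hy'; rewrite /part /lowered nth_set_nth /=.
have -> : (y'.-1 == y.-1) = (y' == y) by apply/eqP/eqP; lia.
by case: eqP => [->|_]; rewrite ?subn1 ?subn0.
Qed.

Lemma lowered_sorted : sorted geq lowered.
Proof.
apply: sorted_geq_part => y' hy'; rewrite !part_lowered //.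
have mono := part_antimono Hl hy' (leqnSn y').
case: (eqVneq y' y) => [->|ne]; last by rewrite [_ - false]subn0 (leq_trans (leq_subr _ _) mono).
by rewrite (gtn_eqF (ltnSn y)); move: removable; lia.
Qed.

Lemma part_rem_cell y' : 0 < y' -> part (rem_cell l y) y' = part l y' - (y' == y).
Proof.
by move=> hy'; rewrite /part nth_filter_gt0 ?lowered_sorted // -/(part _ _) part_lowered.
Qed.

Lemma rem_cell_partition : is_partition (rem_cell l y).
Proof. by rewrite /is_partition filter_all (sorted_filter geq_trans _ lowered_sorted). Qed.

Lemma covers_rem_cell : covers (rem_cell l y) l (part l y, y).
Proof.
have hpos : 0 < part l y by move: removable; lia.
have := covers_of_parts rem_cell_partition Hl hy; rewrite part_rem_cell // eqxx subn1 prednK //.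
apply=> y' hy'; rewrite part_rem_cell //.
by case: eqP => [->|_] /=; [rewrite subn1 addn1 prednK | rewrite subn0 addn0].
Qed.

End Corners.

Section CoversCorner.
Variables (kappa rho : seq nat) (e : nat * nat).
Hypothesis H : covers kappa rho e.

Lemma covers_addable : 1 < e.2 -> part kappa e.2 < part kappa e.2.-1.
Proof.
move=> he; have he1 : 0 < e.2.-1 by lia.
have := part_antimono (covers_rho H) he1 (leq_pred e.2).
rewrite !(covers_part H) ?eqxx ?(ltn_eqF (_ : e.2.-1 < e.2)) /=; lia.
Qed.

Lemma covers_removable : part rho e.2.+1 < part rho e.2.
Proof.
have [_ he] := covers_corner_gt0 H.
rewrite !(covers_part H) // eqxx (gtn_eqF (ltnSn _)) /= addn0 addn1 ltnS.
by apply: (part_antimono (covers_kappa H) he).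
Qed.

Lemma covers_eq_add_cell : rho = add_cell kappa e.2.
Proof.
have [_ he] := covers_corner_gt0 H.
apply: partition_eq (covers_rho H) (add_cell_partition (covers_kappa H) he covers_addable) _.
by move=> y hy; rewrite (covers_part H) // part_add_cell.
Qed.

Lemma covers_eq_rem_cell : kappa = rem_cell rho e.2.
Proof.
have [_ he] := covers_corner_gt0 H.
apply: partition_eq (covers_kappa H) (rem_cell_partition (covers_rho H) he covers_removable) _.
by move=> y hy; rewrite part_rem_cell ?(covers_rho H) ?covers_removable // (covers_part H) // addnK.
Qed.

End CoversCorner.

(** * The partitions lambda^(+s) and lambda^(-r) *)

(* [dpart l k] is u_k for 1 <= k <= d, and 0 for k > d. *)
Definition dpart (l : seq nat) (k : nat) : nat := nth 0 (dparts l) k.-1.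

Lemma vsumE l k : 0 < k -> vsum l k = conjp l (dpart l k).
Proof. by case: k. Qed.

Lemma conjp_succ_ltn l a : a \in l -> conjp l a.+1 < conjp l a.
Proof.
move=> al; have -> : conjp l a = conjp l a.+1 + count (pred1 a) l.
  rewrite /conjp; elim: (l) => //= b s ->.
  by case: (ltngtP a b) => /=; lia.
by rewrite -{1}[conjp l a.+1]addn0 ltn_add2l -has_count; apply/hasP; exists a => /=.
Qed.

Lemma dparts_sorted l : is_partition l -> sorted gtn (dparts l).
Proof.
move=> Hl; have Hs : sorted geq (dparts l).
  by apply: (subseq_sorted geq_trans (undup_subseq l)); case/andP: Hl.
rewrite -(revK (dparts l)) rev_sorted ltn_sorted_uniq_leq rev_uniq undup_uniq.
by rewrite rev_sorted.
Qed.

Section DistinctParts.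
Variable l : seq nat.
Hypothesis Hl : is_partition l.
Local Notation d := (ndist l).

Lemma mem_dpart k : 0 < k <= d -> dpart l k \in l.
Proof.
by case/andP=> h1 h2; rewrite -mem_undup; apply: mem_nth; rewrite prednK.
Qed.

Lemma dpart_gt0 k : 0 < k <= d -> 0 < dpart l k.
Proof. by move=> hk; have := mem_dpart hk; case/andP: Hl => _ /allP; apply. Qed.

Lemma dpart_ltn i j : 0 < i <= d -> i < j -> dpart l j < dpart l i.
Proof.
move=> hi hij; case: (leqP j d) => hj; last first.
  by rewrite /dpart nth_default ?(dpart_gt0 hi) // -/(ndist l); lia.
rewrite /dpart; apply: (sorted_ltn_nth (rev_trans ltn_trans) 0 (dparts_sorted Hl));
  rewrite ?inE -/(ndist l); lia.
Qed.

Lemma dpart_leq i j : 0 < i -> i <= j -> dpart l j <= dpart l i.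
Proof.
move=> hi; rewrite leq_eqVlt => /orP[/eqP -> // | hij].
case: (leqP i d) => hid; first by rewrite ltnW // dpart_ltn ?hi.
by rewrite /dpart !nth_default // -/(ndist l); lia.
Qed.

Lemma mem_dpartP p : p \in l -> exists2 k, 0 < k <= d & p = dpart l k.
Proof. by rewrite -mem_undup => /(nthP 0)[i hi <-]; exists i.+1. Qed.

Lemma dpart_gap k p : 0 < k <= d -> p \in l -> (dpart l k.+1 < p) = (dpart l k <= p).
Proof.
move=> hk /mem_dpartP[j /andP[hj _] ->]; have hk1 := dpart_ltn hk (ltnSn k).
case: (leqP j k) => hjk; first by rewrite dpart_leq // (leq_trans hk1) ?dpart_leq.
have h := dpart_leq (ltn0Sn k) hjk.
by rewrite ltnNge h leqNgt (leq_ltn_trans h hk1).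
Qed.

Lemma conjp_dpart_succ k : k <= d -> conjp l (dpart l k.+1).+1 = vsum l k.
Proof.
case: k => [|k] hk /=.
  apply/eqP; rewrite -leqn0 leqNgt -has_count.
  by apply/hasP => -[p /mem_dpartP[j /andP[hj _] ->]] /=; rewrite ltnNge dpart_leq.
by apply: eq_in_count => p hp /=; apply: dpart_gap.
Qed.

Lemma part_vsum_succ k : k <= d -> part l (vsum l k).+1 = dpart l k.+1.
Proof.
move=> hk; apply: eqn_from_leq => x hx; rewrite leq_part_conjp //.
case: (leqP x (dpart l k.+1)) => hxu; last first.
  by apply/negbTE; rewrite -ltnNge ltnS -(conjp_dpart_succ hk) conjp_antimono.
case: (ltnP k d) => hkd; last by move: hxu; rewrite /dpart nth_default //; lia.
rewrite -(conjp_dpart_succ hk).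
exact: leq_trans (conjp_succ_ltn (mem_dpart _)) (conjp_antimono _ hxu).
Qed.

Lemma vsum_gt0 k : 0 < k <= d -> 0 < vsum l k.
Proof.
move=> hk; rewrite vsumE -?has_count; last by case/andP: hk.
by apply/hasP; exists (dpart l k); rewrite ?mem_dpart.
Qed.

Lemma part_vsum k : 0 < k <= d -> part l (vsum l k) = dpart l k.
Proof.
move=> hk; have k0 : 0 < k by case/andP: hk.
apply: eqn_from_leq => x hx; rewrite leq_part_conjp ?vsum_gt0 // vsumE //.
case: (leqP x (dpart l k)) => hxu; first by rewrite conjp_antimono.
apply/negbTE; rewrite -ltnNge.
exact: leq_ltn_trans (conjp_antimono _ hxu) (conjp_succ_ltn (mem_dpart hk)).
Qed.

Lemma vsum_ltn k : 0 < k <= d -> vsum l k.-1 < vsum l k.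
Proof.
move=> hk; have k0 : 0 < k by case/andP: hk.
rewrite -conjp_dpart_succ ?prednK ?vsumE //; last by case/andP: hk; lia.
exact: conjp_succ_ltn (mem_dpart hk).
Qed.

Lemma vsum_removable k : 0 < k <= d -> part l (vsum l k).+1 < part l (vsum l k).
Proof.
move=> hk; rewrite part_vsum_succ ?part_vsum //; last by case/andP: hk.
exact: dpart_ltn hk (ltnSn k).
Qed.

Lemma dpart1 : dpart l 1 = head 0 l.
Proof. by rewrite -(part_vsum_succ (leq0n d)); case: (l). Qed.

Lemma mem_conj_part v : (v \in conj_part l) = (v \in map (vsum l) (iota 1 d)).
Proof.
apply/idP/idP; last first.
  case/mapP=> k; rewrite mem_iota => /andP[hk1 hkd] ->; have hk : 0 < k <= d by lia.
  rewrite vsumE // -part_conj ?dpart_gt0 //; apply: mem_nth.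
  by rewrite size_mkseq prednK ?dpart_gt0 // -dpart1 dpart_leq.
case/mapP=> i; rewrite mem_iota add0n => /andP[_ hi] ->; set x := i.+1.
have hx : x <= dpart l 1 by rewrite dpart1.
have hd : 0 < d by rewrite lt0n; apply: contraTneq hx; rewrite /ndist /dpart => /size0nil ->.
pose P k := (0 < k <= d) && (x <= dpart l k).
have exP : exists k, P k by exists 1; rewrite /P hd hx.
have ubP k : P k -> k <= d by case/andP=> /andP[].
case: (ex_maxnP exP ubP) => k /andP[hk hxk] kmax.
apply/mapP; exists k; first by rewrite mem_iota; lia.
have hkd : k <= d by case/andP: hk.
apply/eqP; rewrite eqn_leq; apply/andP; split; last by rewrite vsumE ?conjp_antimono //; lia.
rewrite -(conjp_dpart_succ hkd) conjp_antimono //.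
case: (ltnP k d) => hkd'; last by rewrite /dpart nth_default.
rewrite ltnNge; apply/negP => h.
by have := kmax k.+1; rewrite /P h hkd' ltnn => /(_ isT).
Qed.

Lemma dparts_conj : dparts (conj_part l) = rev (map (vsum l) (iota 1 d)).
Proof.
apply: (irr_sorted_eq (rev_trans ltn_trans) ltnn).
- exact: dparts_sorted (conj_partition Hl).
- rewrite rev_sorted; apply/(sortedP 0) => i; rewrite size_map size_iota => hi.
  rewrite !(nth_map 0) ?size_iota ?nth_iota; try lia.
  by have /= := @vsum_ltn (2 + i); apply; lia.
- by move=> v; rewrite mem_undup mem_rev mem_conj_part.
Qed.

Lemma dpart_conj j : 0 < j <= d -> dpart (conj_part l) j = vsum l (d.+1 - j).
Proof.
move=> hj; rewrite /dpart dparts_conj nth_rev size_map size_iota; last by lia.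
by rewrite (nth_map 0) ?size_iota ?nth_iota; try lia; congr vsum; lia.
Qed.

Lemma vsum_conj j : j <= d -> vsum (conj_part l) j = dpart l (d.+1 - j).
Proof.
case: j => [|j] hj; first by rewrite subn0 /dpart nth_default.
have hj' : 0 < j.+1 <= d by rewrite hj.
have hk : 0 < d.+1 - j.+1 <= d by lia.
by rewrite vsumE // conjp_conj ?dpart_conj ?part_vsum ?vsum_gt0.
Qed.

Lemma covers_lplus s : s <= d ->
  covers l (lplus l s) ((part l (vsum l s).+1).+1, (vsum l s).+1).
Proof.
move=> hs; apply: covers_add_cell => // hv /=.
by apply: vsum_removable; case: s hs hv => //= s ->.
Qed.

Lemma covers_lminus r : 0 < r <= d -> covers (lminus l r) l (part l (vsum l r), vsum l r).
Proof.
case: r => // r hr.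
exact: covers_rem_cell Hl (vsum_gt0 hr) (vsum_removable hr).
Qed.

Lemma conj_lplus s : s <= d -> conj_part (lplus l s) = lplus (conj_part l) (d - s).
Proof.
move=> hs; rewrite (covers_eq_add_cell (covers_conj (covers_lplus hs))) /=.
rewrite part_vsum_succ // /lplus vsum_conj ?leq_subr //.
by have -> : d.+1 - (d - s) = s.+1 by lia.
Qed.

Lemma conj_lminus r : 0 < r <= d -> conj_part (lminus l r) = lminus (conj_part l) (d - r).+1.
Proof.
move=> hr; rewrite -[lminus (conj_part l) _]/(rem_cell _ (vsum (conj_part l) (d - r).+1)).
rewrite (covers_eq_rem_cell (covers_conj (covers_lminus hr))) vsum_conj; last by lia.
by rewrite /= part_vsum //; congr (rem_cell _ (dpart l _)); lia.
Qed.

End DistinctParts.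

(** * Conjugating the transition probabilities *)

Local Open Scope ring_scope.

Lemma prodr_const_seq (R : pzSemiRingType) (T : Type) (s : seq T) (x : R) :
  \prod_(c <- s) x = x ^+ size s.
Proof. by elim: s => [|c s IH]; rewrite ?big_nil ?big_cons ?IH ?exprS. Qed.

Section HookRatios.
Variables (F : fieldType) (q t : F).

Definition row_ratio (a l : int) : F := br q t a (l + 1) / br q t (a + 1) (l + 1).
Definition col_ratio (a l : int) : F := br q t (a + 1) l / br q t (a + 1) (l + 1).
Definition row_ratio_bar (a l : int) : F := br q t (a + 1) l / br q t (a + 1 + 1) l.
Definition col_ratio_bar (a l : int) : F := br q t a (l + 1) / br q t a (l + 1 + 1).

Variables (kappa rho : seq nat) (e : nat * nat).
Hypothesis H : covers kappa rho e.

Lemma alpha_covers : alpha q t rho kappa =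
  (\prod_(c <- Rset rho kappa) row_ratio (arm kappa c) (leg kappa c)) *
  \prod_(c <- Cset rho kappa) col_ratio (arm kappa c) (leg kappa c).
Proof.
by congr (_ * _); apply: eq_big_seq => c;
  [case/(mem_Rset_covers H) => -> -> | case/(mem_Cset_covers H) => -> ->].
Qed.

Lemma alphabar_covers : alphabar q t rho kappa =
  (\prod_(c <- Rset rho kappa) row_ratio_bar (arm kappa c) (leg kappa c)) *
  \prod_(c <- Cset rho kappa) col_ratio_bar (arm kappa c) (leg kappa c).
Proof.
by congr (_ * _); apply: eq_big_seq => c;
  [case/(mem_Rset_covers H) => -> -> | case/(mem_Cset_covers H) => -> ->].
Qed.

End HookRatios.

Section Inversion.
Variables (F : fieldType) (q t : F).
Hypotheses (hq : q != 0) (ht : t != 0).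

Lemma br_inv i j : br q^-1 t^-1 i j = - br t q j i / (q ^ i * t ^ j).
Proof.
have qi : q ^ i != 0 by rewrite expfz_neq0.
have tj : t ^ j != 0 by rewrite expfz_neq0.
by rewrite /br !exprz_inv -!invr_expz; field; rewrite qi tj.
Qed.

Lemma br_ratio_inv_q a b :
  br q^-1 t^-1 b a / br q^-1 t^-1 (b + 1) a = br t q a b / br t q a (b + 1) * q.
Proof.
rewrite !br_inv expfzDr // expr1z.
have qb : q ^ b != 0 by rewrite expfz_neq0.
have ta : t ^ a != 0 by rewrite expfz_neq0.
have [->|nz] := eqVneq (br t q a (b + 1)) 0; first by rewrite !(oppr0, mul0r, invr0, mulr0).
by field; rewrite ?oppr_eq0 ?nz ?ta ?qb ?hq ?ht.
Qed.

Lemma br_ratio_inv_t a b :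
  br q^-1 t^-1 b a / br q^-1 t^-1 b (a + 1) = br t q a b / br t q (a + 1) b * t.
Proof.
rewrite !br_inv expfzDr // expr1z.
have qb : q ^ b != 0 by rewrite expfz_neq0.
have ta : t ^ a != 0 by rewrite expfz_neq0.
have [->|nz] := eqVneq (br t q (a + 1) b) 0; first by rewrite !(oppr0, mul0r, invr0, mulr0).
by field; rewrite ?oppr_eq0 ?nz ?ta ?qb ?hq ?ht.
Qed.

Variables (kappa rho : seq nat) (e : nat * nat).
Hypothesis H : covers kappa rho e.

Lemma alpha_conj : alpha q^-1 t^-1 (conj_part rho) (conj_part kappa)
  = alpha t q rho kappa * (q ^ (nleg rho - nleg kappa) * t ^ (narm rho - narm kappa)).
Proof.
rewrite (alpha_covers _ _ (covers_conj H)) (big_Rset_conj H) (big_Cset_conj H).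
rewrite (alpha_covers _ _ H) (nleg_covers H) (narm_covers H).
rewrite (eq_bigr (fun c => col_ratio t q (arm kappa c) (leg kappa c) * q)) => [|c _];
  last exact: br_ratio_inv_q.
rewrite [X in _ * X](eq_bigr (fun c => row_ratio t q (arm kappa c) (leg kappa c) * t)) => [|c _];
  last exact: br_ratio_inv_t.
by rewrite !big_split /= !prodr_const_seq -!exprnP; ring.
Qed.

Lemma alphabar_conj : alphabar q^-1 t^-1 (conj_part rho) (conj_part kappa)
  = alphabar t q rho kappa * (q ^ (nleg rho - nleg kappa) * t ^ (narm rho - narm kappa)).
Proof.
rewrite (alphabar_covers _ _ (covers_conj H)) (big_Rset_conj H) (big_Cset_conj H).
rewrite (alphabar_covers _ _ H) (nleg_covers H) (narm_covers H).
rewrite (eq_bigr (fun c => col_ratio_bar t q (arm kappa c) (leg kappa c) * q)) => [|c _];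
  last exact: br_ratio_inv_q.
rewrite [X in _ * X](eq_bigr (fun c => row_ratio_bar t q (arm kappa c) (leg kappa c) * t))
  => [|c _]; last exact: br_ratio_inv_t.
by rewrite !big_split /= !prodr_const_seq -!exprnP; ring.
Qed.

End Inversion.

Section TransitionConj.
Variables (F : fieldType) (q t : F).
Hypotheses (hq : q != 0) (ht : t != 0).

Lemma gamma_conj mu lam nu : is_partition mu -> is_partition lam -> is_partition nu ->
  gamma q^-1 t^-1 (conj_part nu) (conj_part lam) (conj_part mu) = gamma t q nu lam mu * (q * t).
Proof.
move=> Hm Hl Hn; rewrite /gamma.
have -> : Aexp (conj_part nu) (conj_part lam) (conj_part mu) = - Bexp nu lam mu.
  by rewrite /Aexp /Bexp !narm_conj //; ring.
have -> : Bexp (conj_part nu) (conj_part lam) (conj_part mu) = - Aexp nu lam mu.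
  by rewrite /Bexp /Aexp !nleg_conj //; ring.
move: (Aexp nu lam mu) (Bexp nu lam mu) => A B.
rewrite !exprz_inv !opprD !opprK.
have -> : (1 - q^-1) * (1 - t^-1) = (1 - t) * (1 - q) / (q * t) by field; rewrite hq ht.
by rewrite invf_div; ring.
Qed.

Lemma transition_weight_conj (a b g : F) (m n u v : int) :
  t^-1 ^ (u - v - 1) * (a * (q ^ m * t ^ u)) * (b * (q ^ n * t ^ v))^-1 / (g * (q * t))
  = q ^ (m - n - 1) * a * b^-1 / g.
Proof.
rewrite exprz_inv -invr_expz !(expfzDr _ _ ht) !(expfzDr _ _ hq) -!invr_expz expr1z !invfM.
move: b^-1 g^-1 => bi gi.
have qn : q ^ n != 0 by rewrite expfz_neq0.
have tu : t ^ u != 0 by rewrite expfz_neq0.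
have tv : t ^ v != 0 by rewrite expfz_neq0.
by field; rewrite hq qn ht tv oner_neq0 tu.
Qed.

Lemma P0_conj lam nu e : covers lam nu e ->
  P0 q^-1 t^-1 (conj_part lam) (conj_part nu) = P0 t q lam nu.
Proof.
move=> H; rewrite /P0 (alpha_conj hq ht H) !nleg_conj ?(covers_kappa H) ?(covers_rho H) //.
have ta : t ^ (narm nu - narm lam) != 0 by rewrite expfz_neq0.
by rewrite exprz_inv -invr_expz; field.
Qed.

Lemma Pbar0_conj lam nu e : covers lam nu e ->
  Pbar0 q^-1 t^-1 (conj_part lam) (conj_part nu) = Pbar0 t q lam nu.
Proof.
move=> H; rewrite /Pbar0 (alphabar_conj hq ht H) !nleg_conj ?(covers_kappa H) ?(covers_rho H) //.
have ta : t ^ (narm nu - narm lam) != 0 by rewrite expfz_neq0.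
by rewrite exprz_inv -invr_expz; field.
Qed.

Lemma P1_conj mu lam nu f e : covers mu lam f -> covers lam nu e ->
  P1 q^-1 t^-1 (conj_part lam) (conj_part mu) (conj_part nu) = P1 t q lam mu nu.
Proof.
move=> Hml Hln; have [Hm Hl Hn] := And3 (covers_kappa Hml) (covers_rho Hml) (covers_rho Hln).
rewrite /P1 /beta gamma_conj // (alpha_conj hq ht Hln) (alpha_conj hq ht Hml) /Bexp !nleg_conj //.
exact: transition_weight_conj.
Qed.

Lemma Pbar1_conj mu lam nu f e : covers mu lam f -> covers lam nu e ->
  Pbar1 q^-1 t^-1 (conj_part lam) (conj_part mu) (conj_part nu) = Pbar1 t q lam mu nu.
Proof.
move=> Hml Hln; have [Hm Hl Hn] := And3 (covers_kappa Hml) (covers_rho Hml) (covers_rho Hln).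
rewrite /Pbar1 /betabar gamma_conj // (alphabar_conj hq ht Hln) (alphabar_conj hq ht Hml).
rewrite /Bexp !nleg_conj //.
exact: transition_weight_conj.
Qed.

End TransitionConj.

Lemma qv_neq0 : qv != 0.
Proof. by rewrite tofrac_eq0 polyC_eq0 polyX_eq0. Qed.

Lemma tv_neq0 : tv != 0.
Proof. by rewrite tofrac_eq0 polyX_eq0. Qed.

Theorem lemma5p2 (l : seq nat) (r s : nat) :
  is_partition l -> (r <= ndist l)%N -> (s <= ndist l)%N ->
  prs tv qv l r s
    = pcol qv tv (conj_part l) (((ndist l).+1 - r) %% (ndist l).+1) (ndist l - s)
  /\ pbarrs tv qv l r s
    = pbarcol qv tv (conj_part l) (((ndist l).+1 - r) %% (ndist l).+1) (ndist l - s).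
Proof.
move=> Hl hr hs; have Hplus := covers_lplus Hl hs.
case: r hr => [|r] hr.
  rewrite subn0 modnn /pcol /pbarcol /prs /pbarrs -conj_lplus //.
  by rewrite (P0_conj qv_neq0 tv_neq0 Hplus) (Pbar0_conj qv_neq0 tv_neq0 Hplus).
have hr' : (0 < r.+1 <= ndist l)%N by [].
have Hminus := covers_lminus Hl hr'.
rewrite modn_small; last by lia.
have -> : ((ndist l).+1 - r.+1 = (ndist l - r.+1).+1)%N by lia.
rewrite /pcol /pbarcol /prs /pbarrs -conj_lplus // -conj_lminus //.
by rewrite (P1_conj qv_neq0 tv_neq0 Hminus Hplus) (Pbar1_conj qv_neq0 tv_neq0 Hminus Hplus).
Qed.
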